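(* Let $\tau\in\mathbb{Z}$ and let $m=2^\alpha a$, $l=2^\beta b$ with $a,b$ positive odd integers, $\alpha\geq1$, $\beta\geq0$. Then \[ 2^{2\alpha}\ \Big|\ (-1)^{m\tau+m+l}\binom{m}{l}\binom{m\tau+l-1}{m-1}-(-1)^{\frac{m\tau+m+l}{2}}\binom{m/2}{l/2}\binom{\frac{m\tau+l}{2}-1}{\frac{m}{2}-1}, \] where for $\beta=0$ the second term is set to zero.
   Context: Binomial coefficients with negative top argument are defined by $\binom{n}{k}=(-1)^k\binom{-n+k-1}{k}$ for $n<0$, $k\geq0$; for $n\geq0$ they are the usual ones (zero when $k>n$). *)

From HB Require Import structures.
From mathcomp Require Import all_boot all_order all_algebra.
Set Implicit Arguments. Unset Strict Implicit. Unset Printing Implicit Defensive.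
Import Order.TTheory GRing.Theory Num.Theory.
Local Open Scope ring_scope.

(* Generalized binomial coefficient with integer top argument:
   binZ n k = 'C(n,k) for n >= 0 (zero when k > n), and
   binZ n k = (-1)^k 'C(-n+k-1, k) for n < 0. *)
Definition binZ (n : int) (k : nat) : int :=
  match n with
  | Posz n' => ('C(n', k))%:Z
  | Negz n' => (-1) ^+ k * ('C(n' + k, k))%:Z
  end.
(* Note: Negz n' = -(n'+1), so -n + k - 1 = n' + k. *)

(* Write m = 2M, l = 2L, N = M tau + L, and P_n(x) = (x+1)(x+3)...(x+2n-1)
   ([oddprod n x]).  Since (2n)! = 2^n n! P_n(0), multiplying the difference
   by the odd number P_L(0) P_(M-L)(0) turns it into
   C(M,L) binZ(N-1, M-1) (P_M(2(L-M) + 2M tau) - e P_M(2(L-M))) with e = +-1.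
   The 2-adic heart of the proof is P_M(x + 2M) = (-1)^M P_M(x) mod 2^(2k+2)
   for x even and M = 2^k a, a odd: for k >= 1 a second-order Taylor
   expansion reduces it to 2^(k+1) | P_M'(x), which is proved by doubling M.
   When l is odd, k binZ(x, k) = x binZ(x-1, k-1) shows that each of the two
   binomials of the first term is divisible by 2^alpha, because l and
   m tau + l are odd. *)

From HB Require Import structures.
From mathcomp Require Import all_boot all_order all_algebra.
From mathcomp Require Import ring zify.
Import Order.TTheory GRing.Theory Num.Theory.
Local Open Scope ring_scope.

Lemma pow2nz k : (2 ^ k)%N%:Z = 2 ^+ k.
Proof. by rewrite -natz natrX. Qed.

Lemma odd_natz n : odd n -> n%:Z = 2 * n./2%:Z + 1.
Proof.
by move=> odd_n; rewrite -{1}(odd_double_half n) odd_n -mul2n PoszD PoszM addrC.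
Qed.

Lemma coprimez_pow2_odd k r : coprimez (2 ^+ k) (2 * r + 1).
Proof. by apply/coprimezXl/coprimezP; exists (- r, 1) => /=; ring. Qed.

Lemma signz_even (w : int) : (-1) ^ (2 * w) = 1 :> int.
Proof. by rewrite expN1r abszM -signr_odd oddM. Qed.

Lemma sign_split (M L : nat) (tau : int) : (L <= M)%N ->
  (-1) ^ (M%:Z * tau + L%:Z + M%:Z) = ((-1) ^+ M) ^+ `|tau|%N * (-1) ^+ (M - L) :> int.
Proof.
move=> leLM; rewrite -addrA exprzDr ?unitrN1 // -PoszD.
rewrite expN1r abszM absz_nat -exprM; congr (_ * _).
by rewrite (_ : L + M = (M - L) + L * 2)%N ?expN1r ?exprD ?exprM ?sqrr_sign ?mulr1 //; lia.
Qed.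

Lemma antiperiodic_mod (f : int -> int) (s e d : int) :
  e ^+ 2 = 1 -> (forall x, exists q, f (x + s) = e * f x + d * q) ->
  forall x t, exists q, f (x + s * t) = e ^+ `|t|%N * f x + d * q.
Proof.
move=> e2 f_s.
have f_sn x n : exists q, f (x + s * n%:Z) = e ^+ n * f x + d * q.
  elim: n => [|n [q IH]]; first by exists 0; rewrite !mulr0 !addr0 mul1r.
  have [q' E] := f_s (x + s * n%:Z).
  have -> : x + s * n.+1%:Z = x + s * n%:Z + s by rewrite intS; ring.
  by rewrite E IH; exists (e * q + q'); rewrite exprS; ring.
move=> x [n|n]; first exact: f_sn.
have [q E] := f_sn (x + s * Negz n) n.+1.
rewrite NegzE -addrA mulrN addNr addr0 in E.
exists (- e ^+ n.+1 * q); rewrite E /= mulrDr mulrA -exprD addnn -mul2n exprM.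
by rewrite e2 expr1n NegzE mulrN; ring.
Qed.

Fixpoint oddprod (n : nat) (x : int) : int :=
  if n is n'.+1 then oddprod n' x * (x + 2 * n'%:Z + 1) else 1.

Fixpoint oddprod_deriv (n : nat) (x : int) : int :=
  if n is n'.+1 then oddprod_deriv n' x * (x + 2 * n'%:Z + 1) + oddprod n' x
  else 0.

Lemma oddprod_recr n x : oddprod n.+1 x = oddprod n x * (x + 2 * n%:Z + 1).
Proof. by []. Qed.

Lemma oddprodD m n x :
  oddprod (m + n) x = oddprod m x * oddprod n (x + 2 * m%:Z).
Proof.
elim: n => [|n IH] /=; first by rewrite addn0 mulr1.
by rewrite addnS /= IH PoszD; ring.
Qed.

Lemma oddprod_recl n x : oddprod n.+1 x = (x + 1) * oddprod n (x + 2).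
Proof. by rewrite -add1n oddprodD /=; ring. Qed.

Lemma oddprod_derivD m n x :
  oddprod_deriv (m + n) x = oddprod_deriv m x * oddprod n (x + 2 * m%:Z)
                            + oddprod m x * oddprod_deriv n (x + 2 * m%:Z).
Proof.
elim: n => [|n IH] /=; first by rewrite addn0 mulr1 mulr0 addr0.
by rewrite addnS /= IH oddprodD PoszD; ring.
Qed.

Lemma oddprod_taylor n x h : exists q,
  oddprod n (x + h) = oddprod n x + h * oddprod_deriv n x + h ^+ 2 * q.
Proof.
elim: n => [|n [q IH]] /=; first by exists 0; ring.
by rewrite IH; exists (oddprod_deriv n x + q * (x + h + 2 * n%:Z + 1)); ring.
Qed.

Lemma oddprod_deriv_shift n x h : exists q,
  oddprod_deriv n (x + 2 * h) = oddprod_deriv n x + 4 * h * q.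
Proof.
elim: n => [|n [q IH]] /=; first by exists 0; ring.
have [r ->] := oddprod_taylor n x (2 * h).
rewrite IH; exists (q * (x + 2 * h + 2 * n%:Z + 1) + oddprod_deriv n x + h * r).
ring.
Qed.

Lemma oddprod_at_even n y : exists r, oddprod n (2 * y) = 2 * r + 1.
Proof.
elim: n => [|n [r IH]] /=; first by exists 0; ring.
by rewrite IH; exists (r * (2 * y + 2 * n%:Z + 1) + y + n%:Z); ring.
Qed.

Lemma oddprod_deriv_at_even n y : exists r, oddprod_deriv n (2 * y) = 2 * r + n%:Z.
Proof.
elim: n => [|n [r IH]] /=; first by exists 0; ring.
have [s ->] := oddprod_at_even n y.
rewrite IH; exists (r * (2 * y + 2 * n%:Z + 1) + n%:Z * (y + n%:Z) + s).
by rewrite intS; ring.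
Qed.

Lemma oddprod_shift_odd a y : odd a -> exists q,
  oddprod a (2 * y + 2 * a%:Z) = - oddprod a (2 * y) + 4 * q.
Proof.
move=> odd_a; have [q ->] := oddprod_taylor a (2 * y) (2 * a%:Z).
have [r ->] := oddprod_at_even a y; have [s ->] := oddprod_deriv_at_even a y.
exists (r + 1 + 2 * a./2%:Z * (a./2%:Z + 1) + a%:Z * s + a%:Z ^+ 2 * q).
by rewrite [a%:Z]odd_natz //; ring.
Qed.

Lemma oddprod_deriv_double M y : exists t,
  oddprod_deriv (M + M) (2 * y) =
    oddprod_deriv M (2 * y) * (oddprod M (2 * y + 2 * M%:Z) + oddprod M (2 * y))
    + 4 * M%:Z * t * oddprod M (2 * y).
Proof.
have [t Ht] := oddprod_deriv_shift M (2 * y) M%:Z.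
by rewrite oddprod_derivD Ht; exists t; ring.
Qed.

Lemma oddprod_deriv_2adic k a y : odd a -> exists u,
  oddprod_deriv (2 ^ k.+1 * a) (2 * y) = 2 ^+ k.+2 * u.
Proof.
move=> odd_a; elim: k y => [|k IH] y; rewrite expnS -mulnA mul2n -addnn.
  rewrite expn0 mul1n; have [t ->] := oddprod_deriv_double a y.
  have [q ->] := oddprod_shift_odd a y odd_a.
  by exists (oddprod_deriv a (2 * y) * q + a%:Z * t * oddprod a (2 * y)); ring.
set M := (2 ^ k.+1 * a)%N; have [t ->] := oddprod_deriv_double M y.
have [u ->] := IH y; have [r0 ->] := oddprod_at_even M y.
have [r1 E1] := oddprod_at_even M (y + M%:Z); rewrite mulrDr in E1; rewrite {}E1.
exists (u * (r1 + r0 + 1) + a%:Z * t * (2 * r0 + 1)).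
by rewrite /M PoszM pow2nz !exprS; ring.
Qed.

Lemma oddprod_shift k a y : odd a -> exists q,
  oddprod (2 ^ k * a) (2 * y + 2 * (2 ^ k * a)%N%:Z)
  = (-1) ^+ (2 ^ k * a) * oddprod (2 ^ k * a) (2 * y) + 2 ^+ (2 * k.+1) * q.
Proof.
move=> odd_a; case: k => [|k].
  rewrite expn0 mul1n -signr_odd odd_a; have [q ->] := oddprod_shift_odd a y odd_a.
  by exists q; ring.
set M := (2 ^ k.+1 * a)%N.
have [q ->] := oddprod_taylor M (2 * y) (2 * M%:Z).
have [u ->] := oddprod_deriv_2adic k a y odd_a.
rewrite -signr_odd oddM oddX /= mul1r; exists (a%:Z * u + a%:Z ^+ 2 * q).
rewrite /M PoszM pow2nz (_ : 2 * k.+2 = k + k + 4)%N; last by lia.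
by rewrite !exprD !exprS; ring.
Qed.

Lemma oddprod_periodic k a y tau (M := (2 ^ k * a)%N) : odd a -> exists q,
  oddprod M (2 * y + 2 * M%:Z * tau)
  = ((-1) ^+ M) ^+ `|tau|%N * oddprod M (2 * y) + 2 ^+ (2 * k.+1) * q.
Proof.
move=> odd_a; pose f z := oddprod M (2 * z).
have f_M z : exists q, f (z + M%:Z) = (-1) ^+ M * f z + 2 ^+ (2 * k.+1) * q.
  by rewrite /f mulrDr; apply: oddprod_shift.
have [q E] := @antiperiodic_mod f _ _ _ (sqrr_sign _ M) f_M y tau.
by exists q; rewrite /f mulrDr mulrA in E.
Qed.

Lemma oddprod_neg k : oddprod k (- 2 * k%:Z) = (-1) ^+ k * oddprod k 0.
Proof.
elim: k => [|k IH]; first by [].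
rewrite oddprod_recl (_ : - 2 * k.+1%:Z + 2 = - 2 * k%:Z); last by rewrite intS; ring.
by rewrite IH oddprod_recr exprS intS; ring.
Qed.

Lemma oddprod_centered L M : (L <= M)%N ->
  oddprod M (2 * (L%:Z - M%:Z)) = (-1) ^+ (M - L) * (oddprod L 0 * oddprod (M - L) 0).
Proof.
move=> leLM; rewrite -{1}(subnK leLM) oddprodD.
have -> : 2 * (L%:Z - M%:Z) = - 2 * (M - L)%N%:Z by rewrite -subzn //; ring.
rewrite oddprod_neg (_ : - 2 * (M - L)%N%:Z + 2 * (M - L)%N%:Z = 0); last by ring.
by ring.
Qed.

Fixpoint ffactz (x : int) (k : nat) : int :=
  if k is k'.+1 then x * ffactz (x - 1) k' else 1.

Lemma ffactz_nat n k : ffactz n%:Z k = (n ^_ k)%:Z.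
Proof.
elim: k n => [|k IH] n; case: n => [|n] //=; first by rewrite mul0r.
by rewrite -predn_int // IH ffactSS PoszM.
Qed.

Lemma ffactz_neg n k : ffactz (Negz n) k = (-1) ^+ k * ((n + k) ^_ k)%:Z.
Proof.
elim: k n => [|k IH] n /=; first by rewrite mul1r ffactn0.
have -> : Negz n - 1 = Negz n.+1 by rewrite !NegzE intS; ring.
rewrite IH addnS ffactnSr addSn subSn ?leq_addl // addnK PoszM NegzE addnC.
by rewrite exprS; ring.
Qed.

Lemma binZ_ffactz x k : binZ x k * k`!%:Z = ffactz x k.
Proof.
by case: x => n /=; rewrite ?ffactz_nat ?ffactz_neg -?mulrA -PoszM bin_ffact.
Qed.

Lemma ffactz_double x K :
  ffactz (2 * x + 1) (2 * K).+1 = 2 ^+ K * ffactz x K * oddprod K.+1 (2 * x - 2 * K%:Z).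
Proof.
elim: K x => [|K IH] x; first by rewrite /=; ring.
rewrite (_ : (2 * K.+1).+1 = (2 * K).+3)%N; last by lia.
have -> : ffactz (2 * x + 1) (2 * K).+3
          = (2 * x + 1) * (2 * x) * ffactz (2 * (x - 1) + 1) (2 * K).+1.
  by rewrite /= (_ : 2 * x + 1 - 1 - 1 - 1 = 2 * (x - 1) + 1 - 1); ring.
rewrite IH [ffactz x _]/= (oddprod_recr K.+1) exprS.
rewrite (_ : 2 * (x - 1) - 2 * K%:Z = 2 * x - 2 * K.+1%:Z); last by rewrite intS; ring.
by rewrite !intS; ring.
Qed.

Lemma fact_double k : (2 * k)`!%:Z = 2 ^+ k * k`!%:Z * oddprod k 0.
Proof.
elim: k => [|k IH]; first by [].
rewrite (_ : (2 * k.+1)%N = (2 * k).+2); last by lia.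
by rewrite !factS !PoszM IH oddprod_recr exprS !intS PoszM; ring.
Qed.

Lemma binZ_double_odd x M : (0 < M)%N ->
  binZ (2 * x + 1) (2 * M - 1) * (2 * M)`!%:Z
  = 2 ^+ M * M`!%:Z * binZ x (M - 1) * oddprod M (2 * x + 2 - 2 * M%:Z).
Proof.
case: M => // K _; rewrite (_ : (2 * K.+1)%N = (2 * K).+2); last by lia.
rewrite subn1 /= factS PoszM mulrCA binZ_ffactz ffactz_double -binZ_ffactz.
rewrite subn1 /= factS PoszM exprS -addn2 PoszD PoszM intS.
by rewrite (_ : 2 * x + 2 - 2 * (1 + K%:Z) = 2 * x - 2 * K%:Z); ring.
Qed.

Lemma binomial_double_oddprod M L x : (0 < M)%N -> (L <= M)%N ->
  'C(2 * M, 2 * L)%:Z * binZ (2 * x + 1) (2 * M - 1) * (oddprod L 0 * oddprod (M - L) 0)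
  = 'C(M, L)%:Z * binZ x (M - 1) * oddprod M (2 * x + 2 - 2 * M%:Z).
Proof.
move=> M_gt0 leLM.
have F_neq0 : 2 ^+ M * L`!%:Z * (M - L)`!%:Z != 0 :> int.
  by rewrite !mulf_neq0 ?expf_neq0 // eqz_nat -lt0n fact_gt0.
apply: (mulIf F_neq0); transitivity (binZ (2 * x + 1) (2 * M - 1) * (2 * M)`!%:Z).
  have le2 : (2 * L <= 2 * M)%N by rewrite leq_mul2l leLM orbT.
  rewrite -(bin_fact le2) -mulnBr !PoszM !fact_double -(subnKC leLM) exprD addKn.
  by ring.
by rewrite binZ_double_odd // -(bin_fact leLM) !PoszM; ring.
Qed.

Lemma mul_binZ_pred x k : k.+1%:Z * binZ x k.+1 = x * binZ (x - 1) k.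
Proof.
have k_neq0 : k`!%:Z != 0 by rewrite eqz_nat -lt0n fact_gt0.
apply: (mulIf k_neq0); transitivity (binZ x k.+1 * k.+1`!%:Z).
  by rewrite factS PoszM; ring.
by rewrite binZ_ffactz /= -binZ_ffactz; ring.
Qed.

Lemma dvdz_binZ d x k :
  coprimez d k.+1%:Z -> (d %| x)%Z -> (d %| binZ x k.+1)%Z.
Proof.
by move=> cop dvd_x; rewrite -(Gauss_dvdzr _ cop) mul_binZ_pred dvdz_mulr.
Qed.

Lemma dvdz_binZ_pred d x k :
  coprimez d x -> (d %| k.+1%:Z)%Z -> (d %| binZ (x - 1) k)%Z.
Proof.
by move=> cop dvd_k; rewrite -(Gauss_dvdzr _ cop) -mul_binZ_pred dvdz_mulr.
Qed.

Lemma dvdz_bin_odd_bottom alpha a b tau (m := (2 ^ alpha * a)%N) :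
  odd a -> odd b -> (0 < alpha)%N ->
  (2 ^+ (2 * alpha) %| 'C(m, b)%:Z * binZ (m%:Z * tau + b%:Z - 1) (m - 1))%Z.
Proof.
move=> odd_a odd_b alpha_gt0.
have dvd_m : (2 ^+ alpha %| m%:Z)%Z by rewrite PoszM pow2nz dvdz_mulr.
rewrite mul2n -addnn exprD; apply: dvdz_mul.
  rewrite -(prednK (odd_gt0 odd_b)); apply: dvdz_binZ dvd_m.
  by rewrite prednK ?odd_gt0 // odd_natz // coprimez_pow2_odd.
have m_gt0 : (0 < m)%N by rewrite muln_gt0 expn_gt0 (odd_gt0 odd_a).
apply: dvdz_binZ_pred; last by rewrite subn1 prednK.
rewrite PoszM pow2nz [b%:Z]odd_natz //.
rewrite (_ : _ * tau + _ = 2 * (2 ^+ alpha.-1 * a%:Z * tau + b./2%:Z) + 1).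
  exact: coprimez_pow2_odd.
by rewrite -{1}(prednK alpha_gt0) exprS; ring.
Qed.

Lemma dvdz_bin_double_sub k a L tau (M := (2 ^ k * a)%N) (N := M%:Z * tau + L%:Z) :
  odd a ->
  (2 ^+ (2 * k.+1) %| 'C(2 * M, 2 * L)%:Z * binZ (2 * N - 1) (2 * M - 1)
                     - (-1) ^ (N + M%:Z) * 'C(M, L)%:Z * binZ (N - 1) (M - 1))%Z.
Proof.
move=> odd_a; have [ltML | leLM] := ltnP M L.
  by rewrite !bin_small ?ltn_mul2l // !(mulr0, mul0r) subr0 dvdz0.
have M_gt0 : (0 < M)%N by rewrite muln_gt0 expn_gt0 (odd_gt0 odd_a).
pose P := oddprod L 0 * oddprod (M - L) 0.
have cop : coprimez (2 ^+ (2 * k.+1)) P.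
  have [r1 E1] := oddprod_at_even L 0; have [r2 E2] := oddprod_at_even (M - L) 0.
  by rewrite mulr0 in E1 E2; rewrite /P E1 E2 coprimezMr !coprimez_pow2_odd.
rewrite -(Gauss_dvdzl _ cop) mulrBl (_ : 2 * N - 1 = 2 * (N - 1) + 1); last by ring.
rewrite binomial_double_oddprod //.
rewrite (_ : 2 * (N - 1) + 2 - 2 * M%:Z = 2 * (L%:Z - M%:Z) + 2 * M%:Z * tau).
  have [q ->] := oddprod_periodic k a (L%:Z - M%:Z) tau odd_a.
  rewrite oddprod_centered // /N sign_split //; apply/dvdzP.
  by exists ('C(M, L)%:Z * binZ (M%:Z * tau + L%:Z - 1) (M - 1) * q); rewrite /P; ring.
by rewrite /N; ring.
Qed.

Theorem lemma4p8 (tau : int) (alpha beta a b : nat) :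
  odd a -> odd b -> (1 <= alpha)%N ->
  let m : nat := (2 ^ alpha * a)%N in
  let l : nat := (2 ^ beta * b)%N in
  ((2 ^ (2 * alpha))%N%:Z %|
     ((-1) ^ (m%:Z * tau + m%:Z + l%:Z) * ('C(m, l))%:Z
        * binZ (m%:Z * tau + l%:Z - 1) (m - 1)
      - (if beta == 0%N then 0
         else (-1) ^ (divz (m%:Z * tau + m%:Z + l%:Z) 2)
              * ('C(m %/ 2, l %/ 2))%:Z
              * binZ (divz (m%:Z * tau + l%:Z) 2 - 1) (m %/ 2 - 1))))%Z.
Proof.
move=> odd_a odd_b alpha_gt0; cbv zeta; rewrite pow2nz.
case: beta => [|j] /=.
  by rewrite expn0 mul1n subr0 -mulrA dvdz_mull ?dvdz_bin_odd_bottom.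
case: alpha alpha_gt0 => // k _; rewrite !expnS -!mulnA !mulKn //.
set M := (2 ^ k * a)%N; set L := (2 ^ j * b)%N; set N := M%:Z * tau + L%:Z.
have -> : (2 * M)%N%:Z * tau + (2 * L)%N%:Z = 2 * N by rewrite /N !PoszM; ring.
have -> : (2 * M)%N%:Z * tau + (2 * M)%N%:Z + (2 * L)%N%:Z = 2 * (N + M%:Z).
  by rewrite /N !PoszM; ring.
by rewrite !mulKz // signz_even mul1r; apply: dvdz_bin_double_sub.
Qed.
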